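(* Let $s\in\{0,\tfrac12\}$, $\lambda\in\mathbb{C}$ and $\sigma\in\mathrm{Aut}(\mathfrak{L}^s_\lambda)$. Then $\sigma(I_k)\in\mathbf{I}:=\mathrm{span}_{\mathbb{C}}\{I_m:m\in\mathbb{Z}\}$ for every $k\in\mathbb{Z}$.
   Context: For $s\in\{0,\tfrac12\}$ and $\lambda\in\mathbb{C}$, $\mathfrak{L}^s_\lambda$ is the complex Lie superalgebra with basis $\{L_m,I_m,G_p,H_p : m\in\mathbb{Z},\ p\in s+\mathbb{Z}\}$, even part spanned by the $L_m,I_m$, odd part spanned by the $G_p,H_p$, with brackets $[L_m,L_n]=(m-n)L_{m+n}$, $[L_m,I_n]=(m-n)I_{m+n}$, $[L_m,H_p]=(\tfrac m2-p)H_{m+p}$, $[L_m,G_p]=(\tfrac m2-p)G_{m+p}+\lambda(m+1)H_{m+p}$, $[I_m,G_p]=(m-2p)H_{m+p}$, $[G_p,G_q]=I_{p+q}$, plus super-antisymmetry; all other brackets of basis elements are zero. $\mathrm{Aut}(\mathfrak{L})$ is the group of bijective parity-preserving linear maps $\sigma$ with $\sigma([x,y])=[\sigma(x),\sigma(y)]$. *)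

From HB Require Import structures.
From mathcomp Require Import all_boot all_order all_algebra.
Set Implicit Arguments. Unset Strict Implicit. Unset Printing Implicit Defensive.
Import Order.TTheory GRing.Theory Num.Theory.
Local Open Scope ring_scope.

Inductive kind := KL | KI | KG | KH.

Definition kind_eqb (k1 k2 : kind) : bool :=
  match k1, k2 with
  | KL, KL | KI, KI | KG, KG | KH, KH => true
  | _, _ => false
  end.

Lemma kind_eqP : Equality.axiom kind_eqb.
Proof. by case; case; constructor. Qed.

HB.instance Definition _ := hasDecEq.Build kind kind_eqP.

(* Basis index: (KL,m) = L_m, (KI,m) = I_m, (KG,j) = G_{j+s}, (KH,j) = H_{j+s}.
   Odd generators are indexed by the integer j with p = j + s. *)
Definition bidx := (kind * int)%type.

Section Alg.
Variable C : numClosedFieldType.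

(* s is encoded as a boolean: false <-> s = 0, true <-> s = 1/2. *)
Definition sval (s : bool) : C := if s then 2^-1 else 0.
Definition pval (s : bool) (j : int) : C := j%:~R + sval s.
(* p + q = j1 + j2 + 2s *)
Definition twos (s : bool) : int := if s then 1 else 0.

Variable V : lmodType C.

(* The bracket of two basis vectors, as prescribed (with super-antisymmetry;
   all remaining brackets of basis elements are zero). *)
Definition brtab (s : bool) (lam : C) (e : bidx -> V) (a b : bidx) : V :=
  let: (ka, x) := a in let: (kb, y) := b in
  match ka, kb with
  | KL, KL => (x - y)%:~R *: e (KL, x + y)
  | KL, KI => (x - y)%:~R *: e (KI, x + y)
  | KI, KL => - ((y - x)%:~R *: e (KI, y + x))
  | KL, KH => (x%:~R / 2 - pval s y) *: e (KH, x + y)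
  | KH, KL => - ((y%:~R / 2 - pval s x) *: e (KH, y + x))
  | KL, KG => (x%:~R / 2 - pval s y) *: e (KG, x + y)
                + (lam * (x%:~R + 1)) *: e (KH, x + y)
  | KG, KL => - ((y%:~R / 2 - pval s x) *: e (KG, y + x)
                + (lam * (y%:~R + 1)) *: e (KH, y + x))
  | KI, KG => (x%:~R - 2 * pval s y) *: e (KH, x + y)
  | KG, KI => - ((y%:~R - 2 * pval s x) *: e (KH, y + x))
  | KG, KG => e (KI, x + y + twos s)
  | _, _ => 0
  end.

Definition inspan (e : bidx -> V) (P : pred bidx) (v : V) : Prop :=
  exists (r : seq bidx) (c : bidx -> C),
    all P r /\ v = \sum_(b <- r) c b *: e b.

Definition is_even (b : bidx) : bool := (b.1 == KL) || (b.1 == KI).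
Definition is_odd (b : bidx) : bool := (b.1 == KG) || (b.1 == KH).

Definition is_Ls (s : bool) (lam : C) (e : bidx -> V) (br : V -> V -> V) : Prop :=
  [/\ (forall (r : seq bidx) (c : bidx -> C), uniq r ->
          \sum_(b <- r) c b *: e b = 0 -> forall b, b \in r -> c b = 0),
      (forall v : V, inspan e predT v),
      (forall (a : C) (x y z : V), br (a *: x + y) z = a *: br x z + br y z),
      (forall (a : C) (x y z : V), br z (a *: x + y) = a *: br z x + br z y)
    & (forall a b : bidx, br (e a) (e b) = brtab s lam e a b)].

Definition is_aut (e : bidx -> V) (br : V -> V -> V) (sigma : V -> V) : Prop :=
  [/\ bijective sigma,
      (forall (a : C) (x y : V), sigma (a *: x + y) = a *: sigma x + sigma y),
      (forall v, inspan e is_even v -> inspan e is_even (sigma v)),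
      (forall v, inspan e is_odd v -> inspan e is_odd (sigma v))
    & (forall x y : V, sigma (br x y) = br (sigma x) (sigma y))].

End Alg.

From HB Require Import structures.
From mathcomp Require Import all_boot all_order all_algebra.
Set Implicit Arguments. Unset Strict Implicit.
Import GRing.Theory Num.Theory.
Local Open Scope ring_scope.

(** Since [I_k = [G_0, G_(k-2s)]] and [sigma] preserves the bracket,
    [sigma I_k] is the bracket of two odd elements; bilinearity reduces this
    to brackets of odd basis vectors, all of which lie in the span of the
    [I_m]. *)

Section Span.
Variables (C : numClosedFieldType) (V : lmodType C) (e : bidx -> V).

Lemma inspan0 P : inspan e P 0.
Proof. by exists [::], (fun _ => 0); rewrite big_nil. Qed.

Lemma inspan_basis (P : pred bidx) b : P b -> inspan e P (e b).
Proof. by move=> Pb; exists [:: b], (fun _ => 1); rewrite /= Pb big_seq1 scale1r. Qed.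

Lemma inspanZ P a v : inspan e P v -> inspan e P (a *: v).
Proof.
case=> r [c [Pr ->]]; exists r, (fun b => a * c b); split=> //.
by rewrite scaler_sumr; apply: eq_bigr => b _; rewrite scalerA.
Qed.

(* The coefficient function is shared by all occurrences of an index, so
   [b] is moved to the front and its old occurrences are merged into it. *)
Lemma inspanD_basis (P : pred bidx) v a b : inspan e P v -> P b ->
  inspan e P (v + a *: e b).
Proof.
case=> r [c [Pr ->]] Pb.
exists (b :: filter (predC1 b) r),
  (fun x => if x == b then a + c b *+ count_mem b r else c x).
split.
  by rewrite /= Pb all_filter; apply/allP => x xr; apply/implyP => _; exact: (allP Pr).
rewrite big_cons eqxx big_filter (bigID (fun x => x == b)) /=.
have -> : \sum_(i <- r | i == b) c i *: e i = (c b *: e b) *+ count_mem b r.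
  rewrite (eq_bigr (fun _ => c b *: e b)); last by move=> i /eqP ->.
  by rewrite big_const_seq; elim: (count _ _) => //= n ->; rewrite mulrS.
rewrite [in RHS](eq_bigr (fun i => c i *: e i)) => [|i /= /negbTE -> //].
by rewrite scalerDl scalerMnl [LHS]addrC addrA.
Qed.

Lemma inspanD P v w : inspan e P v -> inspan e P w -> inspan e P (v + w).
Proof.
move=> Hv [r [c [Pr ->]]]; elim: r v Hv Pr => [|b r IH] v Hv /=.
  by rewrite big_nil addr0.
case/andP=> Pb Pr; rewrite big_cons addrA; apply: IH => //.
exact: inspanD_basis.
Qed.

Lemma inspan_linear (f : V -> V) (P Q : pred bidx) v :
  (forall (a : C) (x y : V), f (a *: x + y) = a *: f x + f y) ->
  (forall b, P b -> inspan e Q (f (e b))) ->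
  inspan e P v -> inspan e Q (f v).
Proof.
move=> fL fP [r [c [Pr ->]]].
have f0 : f 0 = 0.
  have := fL 1 0 0; rewrite !scale1r addr0 => f0D.
  by apply: (@addrI _ (f 0)); rewrite addr0 -f0D.
elim: r Pr => [_|b r IH] /=; first by rewrite big_nil f0; exact: inspan0.
by case/andP=> Pb Pr; rewrite big_cons fL; apply: inspanD; [apply/inspanZ/fP|apply: IH].
Qed.

Variables (br : V -> V -> V) (P Q R : pred bidx).
Hypothesis brL : forall (a : C) (x y z : V), br (a *: x + y) z = a *: br x z + br y z.
Hypothesis brR : forall (a : C) (x y z : V), br z (a *: x + y) = a *: br z x + br z y.

Lemma inspan_br x y :
  (forall a b, P a -> Q b -> inspan e R (br (e a) (e b))) ->
  inspan e P x -> inspan e Q y -> inspan e R (br x y).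
Proof.
move=> brPQ Px Qy; apply: (inspan_linear (f := br^~ y)) Px => // a Pa.
by apply: (inspan_linear (f := br (e a))) Qy => // b Qb; exact: brPQ.
Qed.

End Span.

Lemma brtab_odd (C : numClosedFieldType) (V : lmodType C) (e : bidx -> V)
  (s : bool) (lam : C) (a b : bidx) :
  is_odd a -> is_odd b -> inspan e (fun c => c.1 == KI) (brtab s lam e a b).
Proof.
case: a b => [[] x] [[] y] //= _ _; [exact: inspan_basis | exact: inspan0..].
Qed.

Theorem lemma3p1 (C : numClosedFieldType) (s : bool) (lam : C)
  (V : lmodType C) (e : bidx -> V) (br : V -> V -> V) (sigma : V -> V) :
  is_Ls s lam e br -> is_aut e br sigma ->
  forall k : int, inspan e (fun b : bidx => b.1 == KI) (sigma (e (KI, k))).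
Proof.
case=> _ _ brL brR brE [_ _ _ sigma_odd sigma_br] k.
have -> : e (KI, k) = br (e (KG, 0)) (e (KG, k - twos s)).
  by rewrite brE /= add0r subrK.
have sigmaG j : inspan e is_odd (sigma (e (KG, j))).
  by apply: sigma_odd; exact: inspan_basis.
rewrite sigma_br; apply: (inspan_br brL brR _ (sigmaG 0) (sigmaG (k - twos s))) => a b Oa Ob.
by rewrite brE; exact: brtab_odd Oa Ob.
Qed.
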